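(* Let $X$ be a random variable with distribution $P$ on $\mathbb{Z}_+=\{0,1,2,\dots\}$ and mean $E(X)=\lambda>0$. Suppose that either $P(k)>0$ for all $k\in\mathbb{Z}_+$, or there is $N\in\mathbb{Z}_+$ with $P(k)=0$ for all $k>N$. Then $$D(P\,\|\,\mathrm{Po}(\lambda))\le K(X).$$
   Context: For a random variable $X$ with distribution $P$ on $\mathbb{Z}_+$ and mean $\lambda>0$, the scaled score function is $\rho_X(x)=\frac{(x+1)P(x+1)}{\lambda P(x)}-1$ and the scaled Fisher information is $K(X)=\lambda E[\rho_X(X)^2]$, i.e. $K(X)=\lambda\sum_{x\ge0}\frac{\big(\frac{(x+1)P(x+1)}{\lambda}-P(x)\big)^2}{P(x)}$, with the conventions $0/0=0$ and $c/0=\infty$ for $c>0$. $\mathrm{Po}(\lambda)$ is the Poisson distribution with mean $\lambda$, and $D(P\|Q)=\sum_x P(x)\log\frac{P(x)}{Q(x)}$ is the relative entropy (natural logarithm, conventions $0\log(0/a)=0$, $a\log(a/0)=\infty$). *)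

From Stdlib Require Import Reals.
From Coquelicot Require Import Coquelicot.
Open Scope R_scope.

Definition poisson_pmf (lam : R) (x : nat) : R :=
  exp (- lam) * lam ^ x / INR (Stdlib.Arith.Factorial.fact x).

(* Since Stdlib's [ln] is 0
   on nonpositive arguments, a term with P x = 0 equals 0 (convention 0 log 0 = 0);
   Po(lam)(x) > 0 always, so no infinite terms occur. *)
Definition kl_term (P : nat -> R) (lam : R) (x : nat) : R :=
  P x * ln (P x / poisson_pmf lam x).

Definition fisher_num (P : nat -> R) (lam : R) (x : nat) : R :=
  INR (S x) * P (S x) / lam - P x.

(* [scaled_fisher_is P lam K]: the scaled Fisher information K(X) is finite and
   equals K.  Finiteness requires no term of the form c/0 with c > 0, i.e.
   P x = 0 -> fisher_num P lam x = 0; such a term is then 0/0 = 0, which is what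
   Stdlib's total division gives (c^2 * /0 = 0). *)
Definition scaled_fisher_is (P : nat -> R) (lam K : R) : Prop :=
  (forall x, P x = 0 -> fisher_num P lam x = 0) /\
  is_series (fun x => lam * (fisher_num P lam x ^ 2 / P x)) K.

(* The bound is the modified log-Sobolev inequality
     Ent_Po(lam)(f) <= lam * E_Po(lam)[(f(x+1) - f(x))^2 / f(x)]
   applied to the density f = P / Po(lam).  For one Bernoulli(p) trial it follows
   from ln y <= y - 1; the chain rule for entropy, together with the joint
   convexity of (u, v) |-> u^2 / v, tensorises it to Binomial(n+1, p) with the
   factor (n+1) p.  Letting n -> oo with (n+1) p_n -> lam gives the Poisson
   inequality for finitely supported f.  Cutting P / Po(lam) off above N costs
   only the boundary term lam * P(N), which tends to 0. *)

From Stdlib Require Import Reals Lra Lia Psatz.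
From Coquelicot Require Import Coquelicot.
Open Scope R_scope.

Definition bernoulli_smooth (p : R) (h : nat -> R) (x : nat) : R :=
  (1 - p) * h x + p * h (S x).

(* [binom_expect p n h] is E h(B) for B ~ Binomial(n, p), unfolded by
   conditioning on the last trial. *)
Fixpoint binom_expect (p : R) (n : nat) (h : nat -> R) : R :=
  match n with
  | O => h O
  | S m => binom_expect p m (bernoulli_smooth p h)
  end.

Lemma binom_expect_ext p n h1 h2 :
  (forall x, h1 x = h2 x) -> binom_expect p n h1 = binom_expect p n h2.
Proof.
  revert h1 h2; induction n as [|n IH]; intros h1 h2 H; simpl.
  - apply H.
  - apply IH; intro x; unfold bernoulli_smooth; rewrite !H; reflexivity.
Qed.

Lemma binom_expect_lin p n a b h1 h2 :
  binom_expect p n (fun x => a * h1 x + b * h2 x)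
  = a * binom_expect p n h1 + b * binom_expect p n h2.
Proof.
  revert h1 h2; induction n as [|n IH]; intros h1 h2; simpl; [reflexivity|].
  rewrite <- IH; apply binom_expect_ext; intro x; unfold bernoulli_smooth; ring.
Qed.

Lemma binom_expect_scal p n c h :
  binom_expect p n (fun x => c * h x) = c * binom_expect p n h.
Proof.
  rewrite (binom_expect_ext p n _ (fun x => c * h x + 0 * h x)) by (intro; ring).
  rewrite binom_expect_lin; ring.
Qed.

Lemma binom_expect_const p n c : binom_expect p n (fun _ => c) = c.
Proof.
  revert c; induction n as [|n IH]; intro c; simpl; [reflexivity|].
  rewrite (binom_expect_ext p n _ (fun _ => c)); [apply IH|].
  intro; unfold bernoulli_smooth; ring.
Qed.

Lemma binom_expect_le p n h1 h2 : 0 <= p <= 1 ->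
  (forall x, h1 x <= h2 x) -> binom_expect p n h1 <= binom_expect p n h2.
Proof.
  intro Hp; revert h1 h2; induction n as [|n IH]; intros h1 h2 H; simpl; [apply H|].
  apply IH; intro x; unfold bernoulli_smooth.
  pose proof (H x); pose proof (H (S x)); nra.
Qed.

Definition xlnx (x : R) : R := x * ln x.

Definition ent2 (p a b : R) : R :=
  (1 - p) * xlnx a + p * xlnx b - xlnx ((1 - p) * a + p * b).

Definition binom_ent (p : R) (n : nat) (f : nat -> R) : R :=
  binom_expect p n (fun x => xlnx (f x)) - xlnx (binom_expect p n f).

Lemma binom_ent_S p n f :
  binom_ent p (S n) f =
  binom_expect p n (fun x => ent2 p (f x) (f (S x)))
  + binom_ent p n (bernoulli_smooth p f).
Proof.
  unfold binom_ent; simpl.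
  rewrite (binom_expect_ext p n (fun x => ent2 p (f x) (f (S x)))
    (fun x => 1 * bernoulli_smooth p (fun y => xlnx (f y)) x
              + (-1) * xlnx (bernoulli_smooth p f x)))
    by (intro; unfold ent2, bernoulli_smooth; ring).
  rewrite binom_expect_lin; ring.
Qed.

Lemma ln_le_sub_1 x : 0 < x -> ln x <= x - 1.
Proof.
  intro Hx; pose proof (exp_ineq1_le (ln x)) as H; rewrite exp_ln in H; lra.
Qed.

Lemma xlnx_sub_le x m : 0 <= x -> 0 < m -> xlnx x - x * ln m <= x * (x / m - 1).
Proof.
  intros Hx Hm; unfold xlnx.
  destruct (Req_dec x 0) as [->|Hx0]; [lra|].
  assert (Hr : ln (x / m) <= x / m - 1) by (apply ln_le_sub_1, Rdiv_lt_0_compat; lra).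
  rewrite ln_div in Hr by lra.
  apply Rmult_le_compat_l with (r := x) in Hr; lra.
Qed.

Lemma ent2_le p a b : 0 < p < 1 -> 0 < a -> 0 <= b ->
  ent2 p a b <= p * ((b - a) ^ 2 / a).
Proof.
  intros Hp Ha Hb.
  set (m := (1 - p) * a + p * b).
  assert (Hm : 0 < m) by (unfold m; nra).
  (* as (1 - p) a + p b = m, [ent2] splits into the terms x ln (x / m) *)
  apply Rle_trans with ((1 - p) * (a * (a / m - 1)) + p * (b * (b / m - 1))).
  { pose proof (xlnx_sub_le a m ltac:(lra) Hm); pose proof (xlnx_sub_le b m Hb Hm).
    replace (ent2 p a b) with
      ((1 - p) * (xlnx a - a * ln m) + p * (xlnx b - b * ln m))
      by (unfold ent2, xlnx, m; ring).
    apply Rplus_le_compat; apply Rmult_le_compat_l; lra. }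
  replace ((1 - p) * (a * (a / m - 1)) + p * (b * (b / m - 1)))
    with (p * (b - a) ^ 2 * ((1 - p) / m)) by (unfold m in *; field; lra).
  replace (p * ((b - a) ^ 2 / a)) with (p * (b - a) ^ 2 * / a) by (field; lra).
  apply Rmult_le_compat_l; [apply Rmult_le_pos; [lra | apply pow2_ge_0]|].
  apply Rmult_le_reg_l with (m * a); [nra|].
  replace (m * a * ((1 - p) / m)) with ((1 - p) * a) by (field; lra).
  replace (m * a * / a) with m by (field; lra).
  unfold m; nra.
Qed.

(* When [f x = 0] the division returns 0, matching the convention 0/0 = 0
   for the admissible [f] below. *)
Definition dfisher (f : nat -> R) (x : nat) : R := (f (S x) - f x) ^ 2 / f x.

Definition admissible (f : nat -> R) : Prop :=
  (forall x, 0 <= f x) /\ (forall x, f x = 0 -> f (S x) = 0).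

Lemma sq_div_nonneg u v : 0 <= v -> 0 <= u ^ 2 / v.
Proof.
  intro Hv; destruct (Req_dec v 0) as [->|H].
  - unfold Rdiv; rewrite Rinv_0; lra.
  - apply Rdiv_le_0_compat; [apply pow2_ge_0 | lra].
Qed.

Lemma sq_div_convex q p u1 v1 u2 v2 : 0 < q -> 0 < p -> 0 < v1 -> 0 < v2 ->
  (q * u1 + p * u2) ^ 2 / (q * v1 + p * v2) <= q * (u1 ^ 2 / v1) + p * (u2 ^ 2 / v2).
Proof.
  intros Hq Hp H1 H2.
  set (s := u1 / v1); set (t := u2 / v2).
  replace u1 with (s * v1) by (unfold s; field; lra).
  replace u2 with (t * v2) by (unfold t; field; lra).
  apply Rmult_le_reg_l with (q * v1 + p * v2); [nra|].
  replace ((q * v1 + p * v2) * ((q * (s * v1) + p * (t * v2)) ^ 2 / (q * v1 + p * v2)))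
    with ((q * (s * v1) + p * (t * v2)) ^ 2) by (field; nra).
  replace ((q * v1 + p * v2) * (q * ((s * v1) ^ 2 / v1) + p * ((t * v2) ^ 2 / v2)))
    with ((q * (s * v1) + p * (t * v2)) ^ 2 + q * p * v1 * v2 * (s - t) ^ 2)
    by (field; lra).
  assert (0 <= q * p * v1 * v2 * (s - t) ^ 2)
    by (apply Rmult_le_pos; [repeat apply Rmult_le_pos; lra | apply pow2_ge_0]).
  lra.
Qed.

Lemma admissible_smooth p f : 0 < p < 1 -> admissible f -> admissible (bernoulli_smooth p f).
Proof.
  intros Hp [Hnn Hz]; unfold bernoulli_smooth; split.
  - intro x; pose proof (Hnn x); pose proof (Hnn (S x)); nra.
  - intros x Hx; pose proof (Hnn x); pose proof (Hnn (S x)).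
    assert (Hfx : f x = 0) by nra.
    assert (Hfs : f (S x) = 0) by nra.
    rewrite Hfs, (Hz _ Hfs); ring.
Qed.

Lemma dfisher_smooth_le p f x : 0 < p < 1 -> admissible f ->
  dfisher (bernoulli_smooth p f) x <= bernoulli_smooth p (dfisher f) x.
Proof.
  intros Hp [Hnn Hz]; unfold dfisher, bernoulli_smooth.
  destruct (Req_dec (f x) 0) as [E0|N0].
  { rewrite E0, (Hz _ E0), (Hz _ (Hz _ E0)), !Rmult_0_r, Rplus_0_r.
    unfold Rdiv; rewrite Rinv_0; lra. }
  destruct (Req_dec (f (S x)) 0) as [E1|N1].
  { rewrite E1, (Hz _ E1); unfold Rdiv; rewrite Rinv_0.
    pose proof (Hnn x); right; field; lra. }
  replace ((1 - p) * f (S x) + p * f (S (S x)) - ((1 - p) * f x + p * f (S x)))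
    with ((1 - p) * (f (S x) - f x) + p * (f (S (S x)) - f (S x))) by ring.
  pose proof (Hnn x); pose proof (Hnn (S x)).
  apply sq_div_convex; lra.
Qed.

Lemma ent2_le_dfisher p f x : 0 < p < 1 -> admissible f ->
  ent2 p (f x) (f (S x)) <= p * dfisher f x.
Proof.
  intros Hp [Hnn Hz]; unfold dfisher.
  destruct (Req_dec (f x) 0) as [E0|N0].
  - rewrite E0, (Hz _ E0); unfold ent2, xlnx, Rdiv; rewrite Rinv_0.
    replace ((1 - p) * 0 + p * 0) with 0 by ring; lra.
  - pose proof (Hnn x); apply ent2_le; auto; lra.
Qed.

Theorem binom_mlsi p n f : 0 < p < 1 -> admissible f ->
  binom_ent p (S n) f <= INR (S n) * p * binom_expect p n (dfisher f).
Proof.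
  intros Hp; revert f; induction n as [|n IH]; intros f Hf;
    rewrite binom_ent_S.
  - unfold binom_ent; simpl; pose proof (ent2_le_dfisher p f 0 Hp Hf); lra.
  - set (g := bernoulli_smooth p f).
    assert (Hent2 : binom_expect p (S n) (fun x => ent2 p (f x) (f (S x)))
                    <= p * binom_expect p (S n) (dfisher f)).
    { rewrite <- binom_expect_scal; apply binom_expect_le; [lra|].
      intro; apply ent2_le_dfisher; auto. }
    assert (Hsmooth : binom_expect p n (dfisher g) <= binom_expect p (S n) (dfisher f)).
    { apply (binom_expect_le p n); [lra|]; intro; apply dfisher_smooth_le; auto. }
    pose proof (IH g (admissible_smooth p f Hp Hf)).
    assert (INR (S n) * p * binom_expect p n (dfisher g)
            <= INR (S n) * p * binom_expect p (S n) (dfisher f)).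
    { apply Rmult_le_compat_l; [pose proof (pos_INR (S n)); nra | exact Hsmooth]. }
    rewrite (S_INR (S n)); lra.
Qed.

Definition point_mass (k x : nat) : R := if Nat.eqb x k then 1 else 0.

Definition binom_weight (p : R) (n k : nat) : R := binom_expect p n (point_mass k).

Lemma binom_weight_S p n k :
  binom_weight p (S n) k =
  (1 - p) * binom_weight p n k + p * match k with O => 0 | S j => binom_weight p n j end.
Proof.
  unfold binom_weight; simpl.
  destruct k as [|j].
  - rewrite (binom_expect_ext p n _ (fun x => (1 - p) * point_mass 0 x + p * 0))
      by (intro; reflexivity).
    rewrite binom_expect_lin, binom_expect_const; ring.
  - apply binom_expect_lin with (h1 := point_mass (S j)) (h2 := point_mass j).
Qed.

Lemma binom_weight_0 p n : binom_weight p n 0 = (1 - p) ^ n.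
Proof.
  induction n as [|n IH]; [reflexivity|].
  rewrite binom_weight_S, IH; simpl; ring.
Qed.

Lemma binom_weight_ratio p n k :
  INR (S k) * (1 - p) * binom_weight p n (S k)
  = (INR n - INR k) * p * binom_weight p n k.
Proof.
  revert k; induction n as [|n IH]; intro k.
  - unfold binom_weight, point_mass; simpl; destruct k; simpl; ring.
  - rewrite !binom_weight_S.
    destruct k as [|j].
    + pose proof (f_equal (Rmult (1 - p)) (IH 0%nat)).
      rewrite (S_INR n); change (INR 1) with 1 in *; change (INR 0) with 0 in *; lra.
    + pose proof (f_equal (Rmult (1 - p)) (IH (S j))).
      pose proof (f_equal (Rmult p) (IH j)).
      rewrite !S_INR in *; lra.
Qed.

Lemma sum_point_mass (h : nat -> R) N x :
  sum_f_R0 (fun k => h k * point_mass k x) N = if Nat.leb x N then h x else 0.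
Proof.
  induction N as [|N IH].
  - unfold point_mass; destruct x; simpl; ring.
  - rewrite tech5, IH; unfold point_mass.
    destruct (Nat.leb_spec x N), (Nat.leb_spec x (S N)), (Nat.eqb_spec x (S N));
      try lia; subst; ring.
Qed.

Lemma binom_expect_sum p n (c : nat -> R) (d : nat -> nat -> R) N :
  binom_expect p n (fun x => sum_f_R0 (fun k => c k * d k x) N)
  = sum_f_R0 (fun k => c k * binom_expect p n (d k)) N.
Proof.
  induction N as [|N IH]; simpl.
  - apply binom_expect_scal.
  - rewrite <- IH, <- binom_expect_scal.
    rewrite (binom_expect_ext p n _ (fun x => 1 * sum_f_R0 (fun k => c k * d k x) N
                                              + 1 * (c (S N) * d (S N) x)))
      by (intro; ring).
    rewrite binom_expect_lin; ring.
Qed.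

Lemma binom_expect_finite p n h N : (forall x, (N < x)%nat -> h x = 0) ->
  binom_expect p n h = sum_f_R0 (fun k => binom_weight p n k * h k) N.
Proof.
  intro Hsupp.
  rewrite (binom_expect_ext p n h (fun x => sum_f_R0 (fun k => h k * point_mass k x) N)).
  - rewrite binom_expect_sum; apply sum_eq; intros; unfold binom_weight; ring.
  - intro x; rewrite sum_point_mass.
    destruct (Nat.leb_spec x N); [reflexivity | apply Hsupp; lia].
Qed.

Definition poisson_expect (lam : R) (N : nat) (h : nat -> R) : R :=
  sum_f_R0 (fun k => poisson_pmf lam k * h k) N.

Lemma poisson_pmf_pos lam k : 0 < lam -> 0 < poisson_pmf lam k.
Proof.
  intro Hlam; unfold poisson_pmf; apply Rdiv_lt_0_compat.
  - apply Rmult_lt_0_compat; [apply exp_pos | apply pow_lt, Hlam].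
  - apply lt_0_INR, Factorial.lt_O_fact.
Qed.

Lemma poisson_pmf_S lam k :
  poisson_pmf lam (S k) = poisson_pmf lam k * lam / INR (S k).
Proof.
  unfold poisson_pmf.
  change (Factorial.fact (S k)) with (S k * Factorial.fact k)%nat.
  rewrite mult_INR; simpl pow; field.
  split; [apply INR_fact_neq_0 | apply not_0_INR; discriminate].
Qed.

Lemma is_series_poisson_pmf lam : is_series (poisson_pmf lam) 1.
Proof.
  pose proof (is_series_scal_l (exp (- lam)) _ _ (is_exp_Reals lam)) as H.
  replace 1 with (scal (exp (- lam)) (exp lam))
    by (rewrite <- exp_plus, Rplus_opp_l; apply exp_0).
  apply is_series_ext with (2 := H); intro n.
  unfold poisson_pmf, scal; simpl; unfold mult; simpl.
  rewrite pow_n_pow; unfold Rdiv; ring.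
Qed.

Lemma is_lim_seq_sum_f_R0 (a : nat -> nat -> R) (b : nat -> R) N :
  (forall k, is_lim_seq (fun n => a n k) (b k)) ->
  is_lim_seq (fun n => sum_f_R0 (a n) N) (sum_f_R0 b N).
Proof.
  intro H; induction N as [|N IH]; [apply H|].
  apply (is_lim_seq_plus' (fun n => sum_f_R0 (a n) N)); [exact IH | apply H].
Qed.

Lemma ln_one_sub_bounds q : 0 < q < 1 -> - (q / (1 - q)) <= ln (1 - q) <= - q.
Proof.
  intro Hq; split.
  - pose proof (ln_le_sub_1 (/ (1 - q)) ltac:(apply Rinv_0_lt_compat; lra)) as H.
    rewrite ln_Rinv in H by lra.
    replace (/ (1 - q) - 1) with (q / (1 - q)) in H by (field; lra); lra.
  - pose proof (ln_le_sub_1 (1 - q) ltac:(lra)); lra.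
Qed.

Section BinomialToPoisson.

Variables (lam : R) (m : nat -> nat) (p : nat -> R).
Hypotheses (Hp : forall n, 0 < p n < 1)
  (Hrate : is_lim_seq (fun n => INR (m n) * p n) lam)
  (Hp0 : is_lim_seq p 0).

Lemma is_lim_seq_inv_one_sub : is_lim_seq (fun n => / (1 - p n)) 1.
Proof.
  replace (Finite 1) with (Rbar_inv (Finite (1 - 0))) by (simpl; f_equal; field).
  apply is_lim_seq_inv; [apply (is_lim_seq_minus' (fun _ => 1)) | ].
  - apply is_lim_seq_const.
  - exact Hp0.
  - intro E; injection E; lra.
Qed.

Lemma pow_one_sub_lim : is_lim_seq (fun n => (1 - p n) ^ m n) (exp (- lam)).
Proof.
  pose proof (proj1 (is_lim_seq_opp _ _) Hrate) as Hopp; simpl in Hopp.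
  assert (Hln : is_lim_seq (fun n => INR (m n) * ln (1 - p n)) (- lam)).
  { apply is_lim_seq_le_le with
      (u := fun n => - (INR (m n) * p n) * / (1 - p n))
      (w := fun n => - (INR (m n) * p n)).
    - intro n; destruct (ln_one_sub_bounds (p n) (Hp n)) as [Hlo Hhi].
      pose proof (pos_INR (m n)); pose proof (Hp n).
      split.
      + replace (- (INR (m n) * p n) * / (1 - p n)) with (INR (m n) * - (p n / (1 - p n)))
          by (field; lra).
        apply Rmult_le_compat_l; assumption.
      + replace (- (INR (m n) * p n)) with (INR (m n) * - p n) by ring.
        apply Rmult_le_compat_l; assumption.
    - replace (- lam) with (- lam * 1) by ring.
      apply is_lim_seq_mult'; [exact Hopp | apply is_lim_seq_inv_one_sub].
    - exact Hopp. }
  apply is_lim_seq_ext with (fun n => exp (INR (m n) * ln (1 - p n))).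
  - intro n; rewrite <- Rpower_pow by (pose proof (Hp n); lra); reflexivity.
  - apply is_lim_seq_continuous; [apply derivable_continuous_pt, derivable_pt_exp | exact Hln].
Qed.

Lemma binom_weight_lim k :
  is_lim_seq (fun n => binom_weight (p n) (m n) k) (poisson_pmf lam k).
Proof.
  induction k as [|k IH].
  - replace (poisson_pmf lam 0) with (exp (- lam)) by (unfold poisson_pmf; simpl; field).
    apply is_lim_seq_ext with (2 := pow_one_sub_lim).
    intro n; symmetry; apply binom_weight_0.
  - pose proof (lt_0_INR (S k) (Nat.lt_0_succ k)).
    assert (Hfactor : is_lim_seq
              (fun n => (INR (m n) * p n - INR k * p n) / INR (S k) * / (1 - p n))
              (lam / INR (S k))).
    { replace (lam / INR (S k)) with ((lam - INR k * 0) / INR (S k) * 1) by (field; lra).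
      apply is_lim_seq_mult'; [| apply is_lim_seq_inv_one_sub].
      apply (is_lim_seq_scal_r _ (/ INR (S k)) (Finite (lam - INR k * 0))).
      apply is_lim_seq_minus'; [exact Hrate|].
      apply (is_lim_seq_scal_l p (INR k) (Finite 0)), Hp0. }
    rewrite poisson_pmf_S.
    replace (poisson_pmf lam k * lam / INR (S k)) with (lam / INR (S k) * poisson_pmf lam k)
      by (field; lra).
    apply is_lim_seq_ext with (2 := is_lim_seq_mult' _ _ _ _ Hfactor IH).
    intro n; pose proof (Hp n); pose proof (binom_weight_ratio (p n) (m n) k) as R.
    apply Rmult_eq_reg_l with (INR (S k) * (1 - p n)); [| nra].
    rewrite <- Rmult_assoc, R; field; lra.
Qed.

Lemma binom_expect_lim h N : (forall x, (N < x)%nat -> h x = 0) ->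
  is_lim_seq (fun n => binom_expect (p n) (m n) h) (poisson_expect lam N h).
Proof.
  intro Hsupp.
  apply is_lim_seq_ext with (fun n => sum_f_R0 (fun k => binom_weight (p n) (m n) k * h k) N).
  - intro n; symmetry; apply binom_expect_finite, Hsupp.
  - apply (is_lim_seq_sum_f_R0 (fun n k => binom_weight (p n) (m n) k * h k)); intro k.
    apply (is_lim_seq_scal_r (fun n => binom_weight (p n) (m n) k) (h k) (Finite _)).
    apply binom_weight_lim.
Qed.

End BinomialToPoisson.

Lemma sum_f_R0_ge_head (a : nat -> R) N : (forall k, 0 <= a k) -> a 0%nat <= sum_f_R0 a N.
Proof.
  intro H; induction N as [|N IH]; simpl; [lra|]; pose proof (H (S N)); lra.
Qed.

Lemma xlnx_0 : xlnx 0 = 0.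
Proof. unfold xlnx; ring. Qed.

Lemma continuity_pt_xlnx x : 0 < x -> continuity_pt xlnx x.
Proof.
  intro Hx; apply (continuity_pt_mult id ln); [apply continuity_pt_id|].
  apply derivable_continuous_pt; exists (/ x); apply derivable_pt_lim_ln, Hx.
Qed.

Section PoissonMLSI.

Variable lam : R.
Hypothesis Hlam : 0 < lam.

(* Both (n+1) p_n and n p_n tend to lam, so Binomial(n+1, p_n) and
   Binomial(n, p_n) both approach Po(lam). *)
Definition trial_prob (n : nat) : R := lam / (INR n + (lam + 1)).

Lemma trial_prob_bounds n : 0 < trial_prob n < 1.
Proof.
  unfold trial_prob; pose proof (pos_INR n); split.
  - apply Rdiv_lt_0_compat; lra.
  - apply Rmult_lt_reg_r with (INR n + (lam + 1)); [lra|].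
    unfold Rdiv; rewrite Rmult_assoc, Rinv_l; lra.
Qed.

Lemma trial_prob_lim : is_lim_seq trial_prob 0.
Proof.
  replace (Finite 0) with (Rbar_mult lam (Rbar_inv p_infty)) by (simpl; f_equal; ring).
  apply is_lim_seq_scal_l, is_lim_seq_inv; [| discriminate].
  apply (is_lim_seq_plus _ _ _ _ p_infty is_lim_seq_INR (is_lim_seq_const _)).
  reflexivity.
Qed.

Lemma trials_rate_lim (a : R) : is_lim_seq (fun n => (INR n + a) * trial_prob n) lam.
Proof.
  replace lam with (lam - (lam + 1 - a) * 0) by ring.
  apply is_lim_seq_ext with (fun n => lam - (lam + 1 - a) * trial_prob n).
  - intro n; unfold trial_prob; pose proof (pos_INR n); field; lra.
  - apply (is_lim_seq_minus' (fun _ => lam)); [apply is_lim_seq_const|].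
    apply (is_lim_seq_scal_l _ _ (Finite 0)), trial_prob_lim.
Qed.

Theorem poisson_mlsi f N : admissible f -> (forall x, (N < x)%nat -> f x = 0) -> 0 < f 0%nat ->
  poisson_expect lam N (fun x => xlnx (f x)) - xlnx (poisson_expect lam N f)
  <= lam * poisson_expect lam N (dfisher f).
Proof.
  intros Hf Hsupp Hf0.
  assert (HL : 0 < poisson_expect lam N f).
  { apply Rlt_le_trans with (poisson_pmf lam 0 * f 0%nat).
    - apply Rmult_lt_0_compat; [apply poisson_pmf_pos, Hlam | exact Hf0].
    - apply (sum_f_R0_ge_head (fun k => poisson_pmf lam k * f k)); intro k.
      apply Rmult_le_pos; [left; apply poisson_pmf_pos, Hlam | apply Hf]. }
  assert (Hrate : is_lim_seq (fun n => INR n * trial_prob n) lam)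
    by (apply is_lim_seq_ext with (2 := trials_rate_lim 0); intro; ring).
  assert (HrateS : is_lim_seq (fun n => INR (S n) * trial_prob n) lam)
    by (apply is_lim_seq_ext with (2 := trials_rate_lim 1); intro; rewrite S_INR; reflexivity).
  pose proof (binom_expect_lim lam S trial_prob trial_prob_bounds HrateS trial_prob_lim) as HS.
  assert (Hent : is_lim_seq (fun n => binom_ent (trial_prob n) (S n) f)
      (poisson_expect lam N (fun x => xlnx (f x)) - xlnx (poisson_expect lam N f))).
  { apply is_lim_seq_minus'.
    - apply HS; intros x Hx; rewrite (Hsupp x Hx); apply xlnx_0.
    - apply is_lim_seq_continuous; [apply continuity_pt_xlnx, HL | apply HS, Hsupp]. }
  assert (Hfisher : is_lim_seq
      (fun n => INR (S n) * trial_prob n * binom_expect (trial_prob n) n (dfisher f))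
      (lam * poisson_expect lam N (dfisher f))).
  { apply is_lim_seq_mult'; [exact HrateS|].
    apply (binom_expect_lim lam (fun n => n)); auto using trial_prob_bounds, trial_prob_lim.
    intros x Hx; unfold dfisher; rewrite (Hsupp x Hx), (Hsupp (S x)) by lia.
    unfold Rdiv; ring. }
  apply (is_lim_seq_le _ _ _ _ (fun n => binom_mlsi _ n f (trial_prob_bounds n) Hf)
           Hent Hfisher).
Qed.

End PoissonMLSI.

Lemma is_series_sum_f_R0 (a : nat -> R) (l : R) :
  is_series a l <-> is_lim_seq (fun N => sum_f_R0 a N) l.
Proof.
  assert (Hext : forall N, sum_n a N = sum_f_R0 a N) by exact (sum_n_Reals a).
  split; intro H.
  - exact (is_lim_seq_ext _ _ l Hext H).
  - exact (is_lim_seq_ext _ _ l (fun N => eq_sym (Hext N)) H).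
Qed.

Lemma sum_f_R0_le_series (a : nat -> R) (l : R) N :
  (forall k, 0 <= a k) -> is_series a l -> sum_f_R0 a N <= l.
Proof.
  intros Ha Hl; apply is_series_sum_f_R0 in Hl.
  apply (is_lim_seq_incr_compare _ l Hl); intro n; simpl; pose proof (Ha (S n)); lra.
Qed.

Lemma ex_series_bounded (a : nat -> R) (M : R) :
  (forall k, 0 <= a k) -> (forall N, sum_f_R0 a N <= M) -> ex_series a.
Proof.
  intros Ha HM.
  destruct (ex_finite_lim_seq_incr (fun N => sum_f_R0 a N) M) as [l Hl]; auto.
  - intro n; simpl; pose proof (Ha (S n)); lra.
  - exists l; apply is_series_sum_f_R0, Hl.
Qed.

Lemma gibbs_term_nonneg a b : 0 <= a -> 0 < b -> 0 <= a * ln (a / b) - a + b.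
Proof.
  intros Ha Hb; destruct (Req_dec a 0) as [->|Ha0]; [lra|].
  pose proof (ln_le_sub_1 (b / a) ltac:(apply Rdiv_lt_0_compat; lra)) as H.
  rewrite ln_div in H by lra; rewrite ln_div by lra.
  apply Rmult_le_compat_l with (r := a) in H; [|lra].
  replace (a * (b / a - 1)) with (b - a) in H by (field; lra); lra.
Qed.

Section KLTruncation.

Variables (P : nat -> R) (lam K : R).
Hypotheses (HP : forall k, 0 <= P k) (HP1 : is_series P 1) (Hlam : 0 < lam)
  (HK : scaled_fisher_is P lam K).

(* Finiteness of K(X) forbids a term c/0 with c > 0. *)
Lemma pmf_zero_succ k : P k = 0 -> P (S k) = 0.
Proof.
  intro Hk; pose proof (proj1 HK k Hk) as H; unfold fisher_num in H; rewrite Hk in H.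
  pose proof (lt_0_INR (S k) (Nat.lt_0_succ k)).
  replace (INR (S k) * P (S k) / lam - 0) with ((INR (S k) / lam) * P (S k)) in H
    by (field; lra).
  apply Rmult_integral in H as [H|H]; [|exact H].
  exfalso; assert (0 < INR (S k) / lam) by (apply Rdiv_lt_0_compat; lra); lra.
Qed.

Lemma pmf_head_pos : 0 < P 0%nat.
Proof.
  destruct (Req_dec (P 0%nat) 0) as [H0|H0]; [|pose proof (HP 0%nat); lra].
  assert (Hzero : forall k, P k = 0) by (induction k; auto using pmf_zero_succ).
  assert (Hzero_series : is_series (fun n => P n * 0) 1).
  { apply is_series_ext with (2 := HP1); intro n; now rewrite Hzero, Rmult_0_r. }
  pose proof (is_series_unique _ _ (is_series_scal_r 0 _ _ HP1)) as E0.
  rewrite (is_series_unique _ _ Hzero_series) in E0; lra.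
Qed.

Lemma fisher_term_nonneg k : 0 <= lam * (fisher_num P lam k ^ 2 / P k).
Proof. apply Rmult_le_pos; [lra | apply sq_div_nonneg, HP]. Qed.

Definition trunc_density (N x : nat) : R :=
  if Nat.leb x N then P x / poisson_pmf lam x else 0.

Lemma trunc_density_support N x : (N < x)%nat -> trunc_density N x = 0.
Proof. intro Hx; unfold trunc_density; destruct (Nat.leb_spec x N); [lia | reflexivity]. Qed.

Lemma trunc_density_admissible N : admissible (trunc_density N).
Proof.
  pose proof (fun x => poisson_pmf_pos lam x Hlam) as Hpi.
  unfold trunc_density; split.
  - intro x; destruct (Nat.leb x N); [apply Rdiv_le_0_compat; auto | lra].
  - intros x Hx; destruct (Nat.leb_spec (S x) N); [|reflexivity].
    destruct (Nat.leb_spec x N); [|lia].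
    assert (HPx : P x = 0).
    { pose proof (Hpi x); apply Rmult_eq_reg_r with (/ poisson_pmf lam x);
        [rewrite Rmult_0_l; exact Hx | apply Rinv_neq_0_compat; lra]. }
    rewrite (pmf_zero_succ x HPx); unfold Rdiv; ring.
Qed.

Lemma poisson_expect_trunc_density N :
  poisson_expect lam N (trunc_density N) = sum_f_R0 P N.
Proof.
  apply sum_eq; intros i Hi; unfold trunc_density.
  destruct (Nat.leb_spec i N); [|lia].
  pose proof (poisson_pmf_pos lam i Hlam); field; lra.
Qed.

Lemma poisson_expect_xlnx_trunc_density N :
  poisson_expect lam N (fun x => xlnx (trunc_density N x)) = sum_f_R0 (kl_term P lam) N.
Proof.
  apply sum_eq; intros i Hi; unfold trunc_density, kl_term, xlnx.
  destruct (Nat.leb_spec i N); [|lia].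
  pose proof (poisson_pmf_pos lam i Hlam); field; lra.
Qed.

Lemma dfisher_trunc_density_lt N k : (k < N)%nat ->
  lam * (poisson_pmf lam k * dfisher (trunc_density N) k)
  = lam * (fisher_num P lam k ^ 2 / P k).
Proof.
  intro Hk; f_equal; unfold dfisher, trunc_density, fisher_num.
  destruct (Nat.leb_spec k N); [|lia]; destruct (Nat.leb_spec (S k) N); [|lia].
  rewrite poisson_pmf_S.
  pose proof (lt_0_INR (S k) (Nat.lt_0_succ k)); pose proof (poisson_pmf_pos lam k Hlam).
  destruct (Req_dec (P k) 0) as [E|E].
  - rewrite E, (pmf_zero_succ k E); unfold Rdiv; rewrite !Rmult_0_l, Rinv_0; ring.
  - field; repeat split; lra.
Qed.

(* At the cut-off the density drops to 0, costing the boundary term lam * P N. *)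
Lemma dfisher_trunc_density_last N :
  poisson_pmf lam N * dfisher (trunc_density N) N = P N.
Proof.
  unfold dfisher, trunc_density.
  destruct (Nat.leb_spec (S N) N); [lia|]; destruct (Nat.leb_spec N N); [|lia].
  pose proof (poisson_pmf_pos lam N Hlam).
  destruct (Req_dec (P N) 0) as [E|E].
  - rewrite E; unfold Rdiv; rewrite Rmult_0_l, Rinv_0; ring.
  - field; split; lra.
Qed.

Lemma fisher_trunc_density_le N :
  lam * poisson_expect lam N (dfisher (trunc_density N)) <= K + lam * P N.
Proof.
  unfold poisson_expect; rewrite scal_sum.
  assert (Hpartial : forall M, sum_f_R0 (fun k => lam * (fisher_num P lam k ^ 2 / P k)) M <= K)
    by (intro; apply sum_f_R0_le_series; [exact fisher_term_nonneg | exact (proj2 HK)]).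
  pose proof (dfisher_trunc_density_last N) as Hlast.
  destruct N as [|M]; simpl.
  - pose proof (Hpartial 0%nat); pose proof (fisher_term_nonneg 0); simpl in *.
    rewrite Rmult_comm, Hlast; lra.
  - rewrite (sum_eq _ (fun k => lam * (fisher_num P lam k ^ 2 / P k)))
      by (intros i Hi; rewrite <- (dfisher_trunc_density_lt (S M) i) by lia; ring).
    rewrite Rmult_comm, Hlast; pose proof (Hpartial M); lra.
Qed.

Lemma kl_partial_sum_le N : sum_f_R0 (kl_term P lam) N <= K + lam * P N.
Proof.
  pose proof (poisson_mlsi lam Hlam (trunc_density N) N (trunc_density_admissible N)
                (trunc_density_support N)) as H.
  rewrite poisson_expect_trunc_density, poisson_expect_xlnx_trunc_density in H.
  assert (Hsum : 0 < sum_f_R0 P N <= 1).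
  { split; [| apply sum_f_R0_le_series; auto].
    apply Rlt_le_trans with (P 0%nat); [exact pmf_head_pos | apply sum_f_R0_ge_head, HP]. }
  assert (Hxlnx : xlnx (sum_f_R0 P N) <= 0).
  { unfold xlnx; assert (ln (sum_f_R0 P N) <= 0) by (rewrite <- ln_1; apply ln_le; lra).
    nra. }
  pose proof (fisher_trunc_density_le N).
  assert (Hf0 : 0 < trunc_density N 0).
  { unfold trunc_density; simpl.
    apply Rdiv_lt_0_compat; [exact pmf_head_pos | apply poisson_pmf_pos, Hlam]. }
  specialize (H Hf0); lra.
Qed.

Lemma ex_series_kl_term : ex_series (kl_term P lam).
Proof.
  set (gap := fun k => kl_term P lam k - P k + poisson_pmf lam k).
  assert (Hgap : forall k, 0 <= gap k).
  { intro k; apply gibbs_term_nonneg; [apply HP | apply poisson_pmf_pos, Hlam]. }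
  assert (Hbound : forall N, sum_f_R0 gap N <= K + lam + 1).
  { intro N; unfold gap; rewrite sum_plus, minus_sum.
    pose proof (kl_partial_sum_le N).
    pose proof (sum_f_R0_le_series _ _ N (fun k => Rlt_le _ _ (poisson_pmf_pos lam k Hlam))
                  (is_series_poisson_pmf lam)).
    assert (HPN : P N <= sum_f_R0 P N <= 1).
    { split; [| apply sum_f_R0_le_series; auto].
      destruct N; simpl; [lra|]; pose proof (sum_f_R0_ge_head P N HP); pose proof (HP 0%nat); lra. }
    assert (lam * P N <= lam * 1) by (apply Rmult_le_compat_l; lra).
    pose proof (HP N); lra. }
  assert (Hsplit : forall k, gap k + (P k - poisson_pmf lam k) = kl_term P lam k)
    by (intro; unfold gap; ring).
  apply (ex_series_ext _ _ Hsplit), (ex_series_plus gap).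
  - exact (ex_series_bounded gap _ Hgap Hbound).
  - apply (ex_series_minus P); [exists 1; exact HP1 | exists 1; apply is_series_poisson_pmf].
Qed.

End KLTruncation.

Theorem proposition2 (P : nat -> R) (lam K : R) :
  (forall k, 0 <= P k) ->
  is_series P 1 ->
  is_series (fun k => INR k * P k) lam ->
  0 < lam ->
  ((forall k, 0 < P k) \/ (exists N : nat, forall k, (N < k)%nat -> P k = 0)) ->
  scaled_fisher_is P lam K ->
  ex_series (kl_term P lam) /\ Series (kl_term P lam) <= K.
Proof.
  intros HP HP1 _ Hlam _ HK.
  pose proof (ex_series_kl_term P lam K HP HP1 Hlam HK) as Hex.
  split; [exact Hex|].
  assert (Hbound : is_lim_seq (fun N => K + lam * P N) (K + lam * 0)).
  { apply (is_lim_seq_plus' (fun _ => K)); [apply is_lim_seq_const|].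
    apply (is_lim_seq_scal_l P lam (Finite 0)), ex_series_lim_0; exists 1; exact HP1. }
  pose proof (is_lim_seq_le _ _ _ _ (kl_partial_sum_le P lam K HP HP1 Hlam HK)
                (proj1 (is_series_sum_f_R0 _ _) (Series_correct _ Hex)) Hbound) as H.
  simpl in H; lra.
Qed.
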